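(* For a positive integer $N$, let $\mathcal S_2$ be the set of pairs $(A,B)$ of $3\times 3$ matrices with entries in $[-N,N]\cap\mathbb{Z}$, written \[ A = \begin{pmatrix} a_1 & a_2 & a_3 \\ a_4 & a_5 & a_6 \\ a_7 & a_8 & a_9 \end{pmatrix},\qquad B = \begin{pmatrix} b_1 & b_2 & b_3 \\ b_4 & b_5 & b_6 \\ b_7 & b_8 & b_9 \end{pmatrix}, \] such that $AB=BA$ and the $6\times 4$ matrix \[ M = \begin{pmatrix} -b_2 & a_2 & 0 & 0 \\ b_4 & -a_4 & 0 & 0 \\ 0 & 0 & -b_3 & a_3 \\ 0 & 0 & b_7 & -a_7 \\ b_8 & -a_8 & -b_8 & a_8 \\ -b_6 & a_6 & b_6 & -a_6 \end{pmatrix} \] has rank $2$. Then $|\mathcal S_2|\le CN^{10}$ for an absolute constant $C>0$ and all $N\ge 1$. *)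

From mathcomp Require Import all_boot all_order all_algebra.
Set Implicit Arguments. Unset Strict Implicit. Unset Printing Implicit Defensive.
Import Order.TTheory GRing.Theory Num.Theory.
Local Open Scope ring_scope.

(* An integer in [-N, N] is encoded by k : 'I_(2N+1), standing for k - N.
   This is a bijection 'I_(2N+1) -> [-N,N] ∩ Z. *)
Definition decode (N : nat) (k : 'I_(N.*2.+1)) : rat := (k%:Z - N%:Z)%:~R.

Definition decode_mx (N : nat) (A : 'M['I_(N.*2.+1)]_3) : 'M[rat]_3 :=
  map_mx (@decode N) A.

Definition ent (A : 'M[rat]_3) (k : nat) : rat :=
  A (inord ((k.-1) %/ 3)) (inord ((k.-1) %% 3)).

Definition Mmat (A B : 'M[rat]_3) : 'M[rat]_(6, 4) :=
  \matrix_(i < 6, j < 4)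
   let a := ent A in let b := ent B in
   match nat_of_ord i, nat_of_ord j with
   | 0, 0 => - b 2 | 0, 1 => a 2
   | 1, 0 => b 4   | 1, 1 => - a 4
   | 2, 2 => - b 3 | 2, 3 => a 3
   | 3, 2 => b 7   | 3, 3 => - a 7
   | 4, 0 => b 8   | 4, 1 => - a 8 | 4, 2 => - b 8 | 4, 3 => a 8
   | 5, 0 => - b 6 | 5, 1 => a 6   | 5, 2 => b 6   | 5, 3 => - a 6
   | _, _ => 0
   end.

Definition S2 (N : nat) : {set 'M['I_(N.*2.+1)]_3 * 'M['I_(N.*2.+1)]_3} :=
  [set AB | let A := decode_mx AB.1 in let B := decode_mx AB.2 in
            (A *m B == B *m A) && (\rank (Mmat A B) == 2%N)].

(* Write a_k, b_k as vectors (a_k, b_k) of the plane and let wedge be the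
   2 x 2 determinant.  The off-diagonal entries of AB - BA are wedge relations
   between the six off-diagonal vectors and the differences of diagonal
   vectors, while the 3 x 3 minors of M, which vanish when rank M <= 2,
   expand into wedges times entries of M.  Together they leave two cases: at
   most two off-diagonal vectors are nonzero, or all these vectors lie on one
   line through the origin.  In the first case the pair is determined by its
   entries at five positions, whence O(N^10) pairs.  In the second, the eight
   vectors are integer multiples c_k u of one primitive vector u, and c_k has
   O(N / (1 + |u_i|)) choices for i = 1, 2; bounding the eighth power of the
   number of choices by (N / (1 + |u_1|))^4 (N / (1 + |u_2|))^4 makes the sum
   over u factor into (sum_k (N / k)^4)^2 = O(N^8), times O(N^2) choices of
   (a_1, b_1). *)

From mathcomp Require Import all_boot all_order all_algebra.
From mathcomp Require Import ring lra zify.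
Set Implicit Arguments. Unset Strict Implicit. Unset Printing Implicit Defensive.
Import Order.TTheory GRing.Theory Num.Theory.
Local Open Scope ring_scope.

Section Plane.
Variable R : idomainType.
Implicit Types (a : R) (x y z u : R * R).

Definition wedge x y : R := x.1 * y.2 - x.2 * y.1.

Definition perp x : R * R := (- x.2, x.1).

Definition collinear (s : seq (R * R)) : bool :=
  all2rel (fun x y => wedge x y == 0) s.

Lemma wedgeC x y : wedge x y = - wedge y x.
Proof. by rewrite /wedge; ring. Qed.

Lemma wedge_eq0C x y : (wedge x y == 0) = (wedge y x == 0).
Proof. by rewrite wedgeC oppr_eq0. Qed.

Lemma wedgexx x : wedge x x = 0.
Proof. by rewrite /wedge mulrC subrr. Qed.

Lemma wedge0l y : wedge 0 y = 0.
Proof. by rewrite /wedge !mul0r subrr. Qed.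

Lemma wedge0r x : wedge x 0 = 0.
Proof. by rewrite wedgeC wedge0l oppr0. Qed.

Lemma wedgeNl x y : wedge (- x) y = - wedge x y.
Proof. by rewrite /wedge /=; ring. Qed.

Lemma wedgeNr x y : wedge x (- y) = - wedge x y.
Proof. by rewrite /wedge /=; ring. Qed.

Lemma wedgeDl x y z : wedge (x + y) z = wedge x z + wedge y z.
Proof. by rewrite /wedge /=; ring. Qed.

Lemma wedge_perp x y : wedge (perp x) (perp y) = wedge x y.
Proof. by rewrite /wedge /=; ring. Qed.

Lemma perp_eq0 x : (perp x == 0) = (x == 0).
Proof. by case: x => a b; rewrite !xpair_eqE oppr_eq0 andbC. Qed.

Definition signed_perp x y := (y == perp x) || (y == - perp x).

Lemma signed_perp_eq0 x y : signed_perp x y -> (y == 0) = (x == 0).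
Proof. by case/orP=> /eqP->; rewrite ?oppr_eq0 perp_eq0. Qed.

Lemma signed_perp_wedge x x' y y' : signed_perp x x' -> signed_perp y y' ->
  (wedge x' y' == 0) = (wedge x y == 0).
Proof.
by case/orP=> /eqP-> /orP[]/eqP->; rewrite ?wedgeNl ?wedgeNr ?opprK ?oppr_eq0 wedge_perp.
Qed.

Lemma pair_mul_eq0 a x : a * x.1 = 0 -> a * x.2 = 0 -> (a == 0) || (x == 0).
Proof.
case: x => b c /= /eqP; rewrite mulf_eq0 => /orP[-> //| /eqP-> /eqP].
by rewrite mulf_eq0 xpair_eqE eqxx => /orP[->|->]; rewrite ?orbT.
Qed.

(* Parallelism is transitive through a nonzero vector: y.i * wedge x z
   is a combination of wedge x y and wedge y z. *)
Lemma wedge_trans y x z : y != 0 -> wedge x y = 0 -> wedge y z = 0 -> wedge x z = 0.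
Proof.
move=> nz_y xy yz.
have /orP[y1 | y2] : (y.1 != 0) || (y.2 != 0).
  by rewrite -negb_and -xpair_eqE -surjective_pairing.
- apply: (mulfI y1); rewrite mulr0.
  have -> : y.1 * wedge x z = x.1 * wedge y z + z.1 * wedge x y by rewrite /wedge; ring.
  by rewrite xy yz !mulr0 addr0.
- apply: (mulfI y2); rewrite mulr0.
  have -> : y.2 * wedge x z = x.2 * wedge y z + z.2 * wedge x y by rewrite /wedge; ring.
  by rewrite xy yz !mulr0 addr0.
Qed.

Lemma wedge_common u x y : u != 0 -> wedge x u = 0 -> wedge y u = 0 -> wedge x y = 0.
Proof. by move=> nz_u xu yu; apply: wedge_trans nz_u xu _; rewrite wedgeC yu oppr0. Qed.

Lemma collinear_line u s :
  u != 0 -> all (fun y => wedge y u == 0) s -> collinear s.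
Proof.
move=> nz_u /allP su; apply/allrelP => x y /su/eqP xu /su/eqP yu.
by apply/eqP; apply: wedge_common nz_u xu yu.
Qed.

Lemma cycle4_line (a b c d : R * R) :
  wedge a b = 0 -> wedge b c = 0 -> wedge c d = 0 -> wedge d a = 0 ->
  (2 < count (fun v : R * R => v != 0%R) [:: a; b; c; d])%N ->
  exists2 u, u != 0 & all (fun v => wedge v u == 0) [:: a; b; c; d].
Proof.
have corner (a' b' c' d' : R * R) : a' != 0 -> c' != 0 -> (b' != 0) || (d' != 0) ->
    wedge a' b' = 0 -> wedge b' c' = 0 -> wedge c' d' = 0 -> wedge d' a' = 0 ->
    all (fun v => wedge v a' == 0) [:: a'; b'; c'; d'].
  move=> nz_a nz_c nz_bd ab bc cd da.
  have ca : wedge c' a' = 0.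
    case/orP: nz_bd => [nz_b | nz_d].
      by apply: wedge_trans nz_b _ _; rewrite wedgeC ?bc ?ab oppr0.
    exact: wedge_trans nz_d cd da.
  by rewrite /= wedgexx ca da wedgeC ab oppr0 eqxx.
move=> ab bc cd da cnt.
have [/andP[nz_a nz_c] | z_ac] := boolP ((a != 0) && (c != 0)).
  exists a => //; apply: corner => //.
  by move: cnt; rewrite /= nz_a nz_c; case: (b != 0); case: (d != 0).
have [nz_b nz_d nz_ca] : [/\ b != 0, d != 0 & (c != 0) || (a != 0)].
  by move: cnt z_ac => /=; case: (a != 0); case: (b != 0); case: (c != 0); case: (d != 0).
exists b => //; rewrite -(eq_all_r (mem_rot 1 [:: a; b; c; d])) /=.
by apply: corner => //; rewrite wedgeC ab oppr0.
Qed.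

End Plane.

Section MapPair.
Variables (R S : idomainType) (f : {rmorphism R -> S}).

Definition map_pair (x : R * R) : S * S := (f x.1, f x.2).

Lemma wedge_map x y : wedge (map_pair x) (map_pair y) = f (wedge x y).
Proof. by rewrite /wedge /= rmorphB !rmorphM. Qed.

Hypothesis f_inj : injective f.

Lemma map_pair_eq0 x : (map_pair x == 0) = (x == 0).
Proof. by case: x => a b; rewrite /map_pair !xpair_eqE !(raddf_eq0 _ f_inj). Qed.

Lemma collinear_map s : collinear (map map_pair s) = collinear s.
Proof.
rewrite /collinear allrel_mapl allrel_mapr.
by apply: eq_allrel => x y; rewrite wedge_map (raddf_eq0 _ f_inj).
Qed.

End MapPair.

Lemma sum_I3 (V : nmodType) (f : 'I_3 -> V) (i : 'I_3) :
  \sum_k f k = f i + f (i + 1) + f (i + 2).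
Proof.
rewrite (reindex_inj (addrI i)) !big_ord_recr big_ord0 /= add0r.
congr (f _ + f _ + f _); apply/val_inj => /=; [by rewrite addn0 modn_small | by rewrite modnDmr..].
Qed.

Lemma sumn_I3 (f : 'I_3 -> nat) (i : 'I_3) :
  (\sum_k f k = f i + f (i + 1)%R + f (i + 2)%R)%N.
Proof. exact: sum_I3. Qed.

Lemma I3_cases (i j : 'I_3) : [\/ j = i, j = i + 1 | j = i + 2].
Proof.
by case: i j => [[|[|[|//]]] ?] [[|[|[|//]]] ?];
  [constructor 1 | constructor 2 | constructor 3 | constructor 3 | constructor 1
  | constructor 2 | constructor 2 | constructor 3 | constructor 1]; apply/val_inj.
Qed.

Lemma I3_add11 (i : 'I_3) : i + 1 + 1 = i + 2.
Proof. by rewrite -addrA. Qed.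

Lemma I3_add21 (i : 'I_3) : i + 2 + 1 = i.
Proof. by case: i => [[|[|[|//]]] ?]; apply/val_inj. Qed.

Lemma I3_add22 (i : 'I_3) : i + 2 + 2 = i + 1.
Proof. by case: i => [[|[|[|//]]] ?]; apply/val_inj. Qed.

Lemma mx3_eq (T : Type) (A B : 'M[T]_3) : (forall i, A i i = B i i) ->
  (forall i, A i (i + 1) = B i (i + 1)) -> (forall i, A (i + 1) i = B (i + 1) i) ->
  A = B.
Proof.
move=> eq_d eq_u eq_l; apply/matrixP => i j.
case: (I3_cases i j) => ->; [exact: eq_d | exact: eq_u |].
by rewrite -{1 3}[i](I3_add21 i).
Qed.

(* The vectors p i = (a, b)_(i, i+1), q i = (a, b)_(i+1, i) and
   D i = (a, b)_(i, i) - (a, b)_(i+1, i+1), indices mod 3: wedgeDp and wedgeDq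
   are the off-diagonal entries of AB = BA, group_span and transversal are
   what rank M <= 2 imposes. *)
Section Configuration.
Variable R : idomainType.
Variables p q D : 'I_3 -> R * R.
Hypothesis sumD : \sum_i D i = 0.
Hypothesis wedgeDp : forall i, wedge (D i) (p i) = wedge (q (i + 1)) (q (i + 2)).
Hypothesis wedgeDq : forall i, wedge (D i) (q i) = wedge (p (i + 1)) (p (i + 2)).

Let nz i := (p i != 0) || (q i != 0).
Let weight i := ((p i != 0%R) + (q i != 0%R))%N.

Definition on_line u :=
  forall i, [/\ wedge (p i) u = 0, wedge (q i) u = 0 & wedge (D i) u = 0].

Lemma weight_le2 i : (weight i <= 2)%N.
Proof. by rewrite /weight; case: (p i != 0); case: (q i != 0). Qed.

Lemma weight_eq0 i : ~~ nz i -> weight i = 0%N.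
Proof. by rewrite /nz /weight negb_or => /andP[/negPf-> /negPf->]. Qed.

Lemma on_line_diag u : u != 0 -> (forall i, wedge (p i) u = 0 /\ wedge (q i) u = 0) ->
  (forall i, nz i || nz (i + 1) && nz (i + 2)) -> on_line u.
Proof.
move=> nz_u pq_u two.
have Du i : nz i -> wedge (D i) u = 0.
  have [pu qu] := pq_u i; have [pu1 qu1] := pq_u (i + 1); have [pu2 qu2] := pq_u (i + 2).
  have Dp := wedgeDp i; rewrite (wedge_common nz_u qu1 qu2) in Dp.
  have Dq := wedgeDq i; rewrite (wedge_common nz_u pu1 pu2) in Dq.
  case/orP=> [nz_p | nz_q]; first exact: wedge_trans nz_p Dp _.
  exact: wedge_trans nz_q Dq _.
move=> i; have [pu qu] := pq_u i; split=> //.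
case/orP: (two i) => [/Du // | /andP[nz1 nz2]].
have -> : D i = - (D (i + 1) + D (i + 2)).
  by apply/eqP; rewrite -addr_eq0 addrA -sum_I3 sumD.
by rewrite wedgeNl wedgeDl !Du // addr0 oppr0.
Qed.

Lemma config_two_groups i : (forall j, wedge (p j) (q j) = 0) ->
  nz i -> nz (i + 1) -> p (i + 2) = 0 -> q (i + 2) = 0 ->
  (\sum_j weight j <= 2)%N \/ exists2 u, u != 0 & on_line u.
Proof.
move=> flat nz0 nz1 p2 q2.
have q01 : wedge (q i) (q (i + 1)) = 0.
  by have := wedgeDp (i + 2); rewrite I3_add21 I3_add22 p2 wedge0r.
have p10 : wedge (p (i + 1)) (p i) = 0.
  have := wedgeDq (i + 2); rewrite I3_add21 I3_add22 q2 wedge0r => /esym/eqP.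
  by rewrite wedge_eq0C => /eqP.
have q1p1 : wedge (q (i + 1)) (p (i + 1)) = 0 by apply/eqP; rewrite wedge_eq0C flat.
have w2 : weight (i + 2) = 0%N by rewrite /weight p2 q2 eqxx.
have [le2 | gt2] := leqP (count (fun v : R * R => v != 0%R) [:: p i; q i; q (i + 1); p (i + 1)]) 2.
  by left; rewrite (sumn_I3 _ i) w2 addn0 /weight; move: le2 => /=; lia.
have [u nz_u] := cycle4_line (flat i) q01 q1p1 p10 gt2.
move=> /= /and4P[/eqP pu /eqP qu /eqP q1u /andP[/eqP p1u _]].
right; exists u => //; apply: on_line_diag => // [j | j].
  by case: (I3_cases i j) => ->; rewrite ?p2 ?q2 ?wedge0l.
by case: (I3_cases i j) => ->; rewrite ?I3_add21 ?I3_add22 ?nz0 ?nz1 ?orbT.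
Qed.

Lemma nonzero_member i : nz i -> exists2 x, x \in [:: p i; q i] & x != 0.
Proof. by case/orP=> ?; [exists (p i) | exists (q i)]; rewrite ?inE ?eqxx ?orbT. Qed.

Lemma group_line i x : wedge (p i) (q i) = 0 -> x \in [:: p i; q i] ->
  wedge (p i) x = 0 /\ wedge (q i) x = 0.
Proof.
move=> pq; rewrite !inE => /orP[] /eqP->; rewrite wedgexx //.
by split=> //; apply/eqP; rewrite wedge_eq0C pq.
Qed.

Hypothesis group_span : forall i, wedge (p i) (q i) != 0 ->
  [/\ p (i + 1) = 0, q (i + 1) = 0, p (i + 2) = 0 & q (i + 2) = 0].
Hypothesis transversal : forall a b c,
  a \in [:: p 0; q 0] -> b \in [:: p 1; q 1] -> c \in [:: p 2; q 2] ->
  a != 0 -> b != 0 -> c != 0 -> wedge a b = 0 /\ wedge b c = 0.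

Lemma config_three_groups : (forall j, wedge (p j) (q j) = 0) -> (forall j, nz j) ->
  exists2 u, u != 0 & on_line u.
Proof.
move=> flat nz_all.
have [a a0 nz_a] := nonzero_member (nz_all 0).
have [b b1 nz_b] := nonzero_member (nz_all 1).
have [c c2 nz_c] := nonzero_member (nz_all 2).
have par0 x : x \in [:: p 0; q 0] -> wedge x b = 0.
  move=> x0; have [->|nz_x] := eqVneq x 0; first by rewrite wedge0l.
  by case: (transversal x0 b1 c2 nz_x nz_b nz_c).
have par2 x : x \in [:: p 2; q 2] -> wedge x b = 0.
  move=> x2; have [->|nz_x] := eqVneq x 0; first by rewrite wedge0l.
  have [_ /eqP] := transversal a0 b1 x2 nz_a nz_b nz_x.
  by rewrite wedge_eq0C => /eqP.
exists b => //; apply: on_line_diag => // [j | j]; last by rewrite !nz_all.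
have [pb qb] := group_line (flat 1) b1.
case: (I3_cases 0 j) => ->; rewrite ?add0r //.
  by rewrite !par0 // !inE eqxx ?orbT.
by rewrite !par2 // !inE eqxx ?orbT.
Qed.

Lemma weight_sum_le2 i : ~~ nz (i + 1) -> ~~ nz (i + 2) -> (\sum_j weight j <= 2)%N.
Proof.
by move=> z1 z2; rewrite (sumn_I3 _ i) (weight_eq0 z1) (weight_eq0 z2) !addn0 weight_le2.
Qed.

Theorem config_dichotomy :
  (\sum_i weight i <= 2)%N \/ exists2 u, u != 0 & on_line u.
Proof.
have [i span | flat] := pickP (fun i => wedge (p i) (q i) != 0).
  have [p1 q1 p2 q2] := group_span span.
  by left; apply: (weight_sum_le2 (i := i)); rewrite /nz ?p1 ?q1 ?p2 ?q2 eqxx.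
have {}flat j : wedge (p j) (q j) = 0 by apply/eqP/negbFE/flat.
have nzE j : ~~ nz j -> p j = 0 /\ q j = 0.
  by rewrite negb_or !negbK => /andP[/eqP-> /eqP->].
have [e21 e12 e22] : [/\ 2 + 1 = 0 :> 'I_3, 1 + 2 = 0 :> 'I_3 & 2 + 2 = 1 :> 'I_3].
  by split; apply/val_inj.
case n0: (nz 0); case n1: (nz 1); case n2: (nz 2).
- by right; apply: config_three_groups => // j; case: (I3_cases 0 j) => ->; rewrite ?add0r.
- have [p2 q2] := nzE 2 (negbT n2).
  by apply: (config_two_groups (i := 0)); rewrite ?add0r.
- have [p1 q1] := nzE 1 (negbT n1).
  by apply: (config_two_groups (i := 2)); rewrite ?e21 ?e22.
- by left; apply: (weight_sum_le2 (i := 0)); rewrite ?add0r ?n1 ?n2.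
- have [p0 q0] := nzE 0 (negbT n0).
  by apply: (config_two_groups (i := 1)); rewrite ?e12.
- by left; apply: (weight_sum_le2 (i := 1)); rewrite ?e12 ?n2 ?n0.
- by left; apply: (weight_sum_le2 (i := 2)); rewrite ?e21 ?e22 ?n0 ?n1.
- by left; apply: (weight_sum_le2 (i := 0)); rewrite ?add0r ?n1 ?n2.
Qed.

End Configuration.

(* Entries are addressed through inord so that concrete instances reduce. *)
Lemma det_mx33 (R : comNzRingType) (A : 'M[R]_3) :
  let a i j := A (inord i) (inord j) in
  \det A = a 0 0 * (a 1 1 * a 2 2 - a 1 2 * a 2 1)
         - a 0 1 * (a 1 0 * a 2 2 - a 1 2 * a 2 0)
         + a 0 2 * (a 1 0 * a 2 1 - a 1 1 * a 2 0).
Proof.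
move=> a; have aE i j : A i j = a i j by rewrite /a !inord_val.
rewrite !(expand_det_row _ 0) /cofactor !big_ord_recr big_ord0 /=.
rewrite !(expand_det_row _ 0) /cofactor !big_ord_recr !big_ord0 /= !det_mx11 !mxE !aE.
by rewrite /bump /= !(addn0, add0n, addn1, modn_small) //; ring.
Qed.

Section RankTwo.
Variables (F : fieldType) (m n : nat) (M : 'M[F]_(m, n)).

Definition mxpair (j1 j2 : 'I_n) (i : 'I_m) : F * F := (M i j1, M i j2).

Lemma mxrank_mxsub m' n' (f : 'I_m' -> 'I_m) (g : 'I_n' -> 'I_n) :
  (\rank (mxsub f g M) <= \rank M)%N.
Proof.
rewrite mxsubrc; apply: leq_trans (mxrankS (rowsub_sub _ _)) _.
by rewrite -mxrank_tr -[X in (_ <= X)%N]mxrank_tr trmx_mxsub mxrankS ?rowsub_sub.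
Qed.

Lemma det_mxsub_eq0 k (f : 'I_k -> 'I_m) (g : 'I_k -> 'I_n) :
  (\rank M < k)%N -> \det (mxsub f g M) = 0.
Proof.
move=> rk; apply/eqP; apply: contraTT rk => det_nz.
have /mxrank_unit rk_sub : mxsub f g M \in unitmx by rewrite unitmxE unitfE.
by rewrite -leqNgt -{1}rk_sub mxrank_mxsub.
Qed.

Variables j1 j2 : 'I_n.
Local Notation P := (mxpair j1 j2).

(* Expanding a vanishing 3 x 3 minor along its last column. *)
Lemma rank_le2_minor (i1 i2 i3 : 'I_m) (j : 'I_n) : (\rank M <= 2)%N ->
  wedge (P i1) (P i2) * M i3 j - wedge (P i1) (P i3) * M i2 j
    + wedge (P i2) (P i3) * M i1 j = 0.
Proof.
move=> rk; pose f (r : 'I_3) := nth i1 [:: i1; i2; i3] r.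
pose g (r : 'I_3) := nth j1 [:: j1; j2; j] r.
have := det_mxsub_eq0 f g rk; rewrite det_mx33 !mxE /f /g !inordK //= => <-.
by rewrite /mxpair /wedge /=; ring.
Qed.

Lemma rank_le2_wedge_mul (i1 i2 i3 : 'I_m) (j : 'I_n) : (\rank M <= 2)%N ->
  (M i1 j = 0 /\ M i2 j = 0) \/ P i3 = 0 -> wedge (P i1) (P i2) * M i3 j = 0.
Proof.
move=> rk zero; have := rank_le2_minor i1 i2 i3 j rk.
case: zero => [[-> ->] | ->]; first by rewrite !mulr0 subr0 addr0.
by rewrite !wedge0r !mul0r subr0 addr0.
Qed.

Lemma rank_le2_wedge (i1 i2 i3 : 'I_m) (j3 j4 : 'I_n) : (\rank M <= 2)%N ->
  (mxpair j3 j4 i1 = 0 /\ mxpair j3 j4 i2 = 0) \/ P i3 = 0 ->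
  (wedge (P i1) (P i2) == 0) || (mxpair j3 j4 i3 == 0).
Proof.
move=> rk zero; apply: pair_mul_eq0; apply: rank_le2_wedge_mul => //.
  by case: zero => [[[-> _] [-> _]] | ]; [left | right].
by case: zero => [[[_ ->] [_ ->]] | ]; [left | right].
Qed.

End RankTwo.

Section CyclicEntries.
Variables (R : idomainType) (A B : 'M[R]_3).

Definition sup_entry i : R * R := (A i (i + 1), B i (i + 1)).
Definition sub_entry i : R * R := (A (i + 1) i, B (i + 1) i).
Definition diag_diff i : R * R :=
  (A i i - A (i + 1) (i + 1), B i i - B (i + 1) (i + 1)).

Lemma sum_diag_diff : \sum_i diag_diff i = 0.
Proof.
rewrite (sum_I3 _ 0) /diag_diff !add0r (_ : 2 + 1 = 0); last exact/val_inj.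
by apply: injective_projections => /=; ring.
Qed.

Lemma commute_wedge : A *m B = B *m A -> forall i,
  wedge (diag_diff i) (sup_entry i) = wedge (sub_entry (i + 1)) (sub_entry (i + 2)) /\
  wedge (diag_diff i) (sub_entry i) = wedge (sup_entry (i + 1)) (sup_entry (i + 2)).
Proof.
move=> AB i; rewrite /sup_entry /sub_entry !I3_add11 !I3_add21.
split; apply/eqP; rewrite -subr_eq0.
  have : (A *m B - B *m A) i (i + 1) = 0 by rewrite AB subrr mxE.
  by rewrite !mxE !(sum_I3 _ i) => <-; rewrite /wedge /diag_diff /=; apply/eqP; ring.
have : (B *m A - A *m B) (i + 1) i = 0 by rewrite AB subrr mxE.
by rewrite !mxE !(sum_I3 _ i) => <-; rewrite /wedge /diag_diff /=; apply/eqP; ring.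
Qed.

End CyclicEntries.

Lemma cyclic_entries_inj (R : idomainType) (A B A' B' : 'M[R]_3) :
  A 0 0 = A' 0 0 -> B 0 0 = B' 0 0 ->
  (forall i, sup_entry A B i = sup_entry A' B' i) ->
  (forall i, sub_entry A B i = sub_entry A' B' i) ->
  diag_diff A B 0 = diag_diff A' B' 0 -> diag_diff A B 1 = diag_diff A' B' 1 ->
  A = A' /\ B = B'.
Proof.
move=> eA eB eu el; rewrite /diag_diff add0r eA eB => -[/addrI/oppr_inj eA1 /addrI/oppr_inj eB1].
rewrite eA1 eB1 => -[/addrI/oppr_inj eA2 /addrI/oppr_inj eB2].
have diag (C C' : 'M[R]_3) : C 0 0 = C' 0 0 -> C 1 1 = C' 1 1 -> C 2 2 = C' 2 2 ->
    forall i, C i i = C' i i.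
  by move=> e0 e1 e2 i; case: (I3_cases 0 i) => ->; rewrite ?add0r.
by split; apply: mx3_eq => i; [exact: diag | case: (eu i) | case: (el i)
                             | exact: diag | case: (eu i) | case: (el i)].
Qed.

Section MapEntries.
Variables (R S : idomainType) (f : {rmorphism R -> S}) (A B : 'M[R]_3).

Lemma sup_entry_map i :
  sup_entry (map_mx f A) (map_mx f B) i = map_pair f (sup_entry A B i).
Proof. by rewrite /sup_entry !mxE. Qed.

Lemma sub_entry_map i :
  sub_entry (map_mx f A) (map_mx f B) i = map_pair f (sub_entry A B i).
Proof. by rewrite /sub_entry !mxE. Qed.

Lemma diag_diff_map i :
  diag_diff (map_mx f A) (map_mx f B) i = map_pair f (diag_diff A B i).
Proof. by rewrite /diag_diff /map_pair !mxE /= !rmorphB. Qed.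

End MapEntries.

Section MmatRank.
Variables A B : 'M[rat]_3.
Local Notation p := (sup_entry A B).
Local Notation q := (sub_entry A B).
Local Notation L := (mxpair (Mmat A B) 0 1).
Local Notation R := (mxpair (Mmat A B) 2 3).

Lemma Mmat_pairs :
  (L 0 = perp (p 0)) * (L 1 = - perp (q 0)) * (L 2 = 0) * (L 3 = 0)
  * (L 4 = - perp (q 1)) * (L 5 = perp (p 1))
  * (R 0 = 0) * (R 1 = 0) * (R 2 = perp (q 2)) * (R 3 = - perp (p 2))
  * (R 4 = perp (q 1)) * (R 5 = - perp (p 1)).
Proof.
have [i0 i1 i2] : [/\ inord 0 = 0 :> 'I_3, inord 1 = 1 :> 'I_3 & inord 2 = 2 :> 'I_3].
  by split; apply/val_inj; rewrite /= inordK.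
have [s0 s1 s2] : [/\ 0 + 1 = 1 :> 'I_3, 1 + 1 = 2 :> 'I_3 & 2 + 1 = 0 :> 'I_3].
  by split; apply/val_inj.
rewrite /mxpair /Mmat /sup_entry /sub_entry !mxE /ent /= i0 i1 i2 s0 s1 s2.
by do !split; apply: injective_projections; rewrite /= ?opprK.
Qed.

Lemma group0_rows x : x \in [:: p 0; q 0] -> exists2 k, R k = 0 & signed_perp x (L k).
Proof.
by rewrite !inE => /orP[]/eqP->; [exists 0 | exists 1]; rewrite Mmat_pairs /signed_perp ?eqxx ?orbT.
Qed.

Lemma group1_rows x : x \in [:: p 1; q 1] ->
  exists2 k, signed_perp x (L k) & signed_perp x (R k).
Proof.
rewrite !inE => /orP[]/eqP->; [exists 5 | exists 4];
  by rewrite !Mmat_pairs /signed_perp ?eqxx ?orbT.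
Qed.

Lemma group2_rows x : x \in [:: p 2; q 2] -> exists2 k, L k = 0 & signed_perp x (R k).
Proof.
by rewrite !inE => /orP[]/eqP->; [exists 3 | exists 2]; rewrite Mmat_pairs /signed_perp ?eqxx ?orbT.
Qed.

Hypothesis rank_le2 : (\rank (Mmat A B) <= 2)%N.

Lemma LR_wedge a b x k1 k2 k : (R k1 = 0 /\ R k2 = 0) \/ L k = 0 ->
  signed_perp a (L k1) -> signed_perp b (L k2) -> signed_perp x (R k) ->
  (wedge a b == 0) || (x == 0).
Proof.
move=> zero aL bL xR; rewrite -(signed_perp_wedge aL bL) -(signed_perp_eq0 xR).
exact: rank_le2_wedge.
Qed.

Lemma RL_wedge a b x k1 k2 k : (L k1 = 0 /\ L k2 = 0) \/ R k = 0 ->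
  signed_perp a (R k1) -> signed_perp b (R k2) -> signed_perp x (L k) ->
  (wedge a b == 0) || (x == 0).
Proof.
move=> zero aR bR xL; rewrite -(signed_perp_wedge aR bR) -(signed_perp_eq0 xL).
exact: rank_le2_wedge.
Qed.

Lemma Mmat_group_span i : wedge (p i) (q i) != 0 ->
  [/\ p (i + 1) = 0, q (i + 1) = 0, p (i + 2) = 0 & q (i + 2) = 0].
Proof.
have mem_p j : p j \in [:: p j; q j] by rewrite !inE eqxx.
have mem_q j : q j \in [:: p j; q j] by rewrite !inE eqxx orbT.
have [e11 e12 e21 e22] : [/\ 1 + 1 = 2 :> 'I_3, 1 + 2 = 0 :> 'I_3, 2 + 1 = 0 :> 'I_3
                           & 2 + 2 = 1 :> 'I_3] by split; apply/val_inj.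
case: (I3_cases 0 i) => ->; rewrite ?add0r ?e11 ?e12 ?e21 ?e22 => /negPf span.
- have [k1 R1 pL] := group0_rows (mem_p 0); have [k2 R2 qL] := group0_rows (mem_q 0).
  have kill x k : signed_perp x (R k) -> x = 0.
    move=> xR; have := LR_wedge (or_introl (conj R1 R2)) pL qL xR.
    by rewrite span => /eqP.
  have [[? _ /kill->] [? _ /kill->]] := (group1_rows (mem_p 1), group1_rows (mem_q 1)).
  by have [[? _ /kill->] [? _ /kill->]] := (group2_rows (mem_p 2), group2_rows (mem_q 2)).
- have [k1 pL pR] := group1_rows (mem_p 1); have [k2 qL qR] := group1_rows (mem_q 1).
  have killR x k : L k = 0 -> signed_perp x (R k) -> x = 0.
    by move=> Lk xR; have := LR_wedge (or_intror Lk) pL qL xR; rewrite span => /eqP.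
  have killL x k : R k = 0 -> signed_perp x (L k) -> x = 0.
    by move=> Rk xL; have := RL_wedge (or_intror Rk) pR qR xL; rewrite span => /eqP.
  have [[? L0 /(killR _ _ L0)->] [? L0' /(killR _ _ L0')->]] :=
    (group2_rows (mem_p 2), group2_rows (mem_q 2)).
  by have [[? R0 /(killL _ _ R0)->] [? R0' /(killL _ _ R0')->]] :=
    (group0_rows (mem_p 0), group0_rows (mem_q 0)).
- have [k1 L1 pR] := group2_rows (mem_p 2); have [k2 L2 qR] := group2_rows (mem_q 2).
  have kill x k : signed_perp x (L k) -> x = 0.
    move=> xL; have := RL_wedge (or_introl (conj L1 L2)) pR qR xL.
    by rewrite span => /eqP.
  have [[? _ /kill->] [? _ /kill->]] := (group0_rows (mem_p 0), group0_rows (mem_q 0)).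
  by have [[? /kill-> _] [? /kill-> _]] := (group1_rows (mem_p 1), group1_rows (mem_q 1)).
Qed.

Lemma Mmat_transversal a b c :
  a \in [:: p 0; q 0] -> b \in [:: p 1; q 1] -> c \in [:: p 2; q 2] ->
  a != 0 -> b != 0 -> c != 0 -> wedge a b = 0 /\ wedge b c = 0.
Proof.
move=> /group0_rows[ka Ra aL] /group1_rows[kb bL bR] /group2_rows[kc Lc cR] nz_a _ nz_c.
have := LR_wedge (or_intror Lc) aL bL cR; rewrite (negPf nz_c) orbF => /eqP ab.
have := RL_wedge (or_intror Ra) cR bR aL; rewrite (negPf nz_a) orbF wedge_eq0C.
by move=> /eqP.
Qed.

End MmatRank.

Theorem commuting_rank2_dichotomy (A B : 'M[rat]_3) :
  A *m B = B *m A -> (\rank (Mmat A B) <= 2)%N ->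
  (\sum_i ((sup_entry A B i != 0%R) + (sub_entry A B i != 0%R)) <= 2)%N \/
  exists2 u, u != 0 & on_line (sup_entry A B) (sub_entry A B) (diag_diff A B) u.
Proof.
move=> AB rk; apply: config_dichotomy.
- exact: sum_diag_diff.
- by move=> i; case: (commute_wedge AB i).
- by move=> i; case: (commute_wedge AB i).
- exact: Mmat_group_span.
- exact: Mmat_transversal.
Qed.

Lemma card_small_support (I V : finType) (z : V) k :
  (#|[set f : {ffun I -> V} | #|[set i | f i != z]| <= k]| <= 2 ^ #|I| * #|V| ^ k)%N.
Proof.
have V0 : (0 < #|V|)%N by apply/card_gt0P; exists z.
rewrite -sum1_card (partition_big (fun f : {ffun I -> V} => [set i | f i != z])
  (mem (powerset [set: I]))) => [|f _]; last by rewrite /= powersetE subsetT.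
rewrite -cardsT -card_powerset -sum_nat_const leq_sum // => S _.
have [small | big] := leqP #|S| k; last first.
  rewrite big1 // => f /andP[]; rewrite inE => le_k /eqP supp_f.
  by move: big; rewrite -supp_f ltnNge le_k.
apply: leq_trans (leq_pexp2l V0 small); rewrite -(card_pffun_on z S predT) sum1_card.
apply/subset_leq_card/subsetP => f; rewrite !inE => /andP[_ /eqP supp_f].
apply/pffun_onP; split=> [|_ _ //]; apply/subsetP => i.
by rewrite -supp_f inE.
Qed.

Lemma card_family (U C : finType) (F : U -> {set C}) k :
  #|[set s : U * {ffun 'I_k -> C} | [forall j, s.2 j \in F s.1]]| =
  (\sum_u #|F u| ^ k)%N.
Proof.
rewrite -sum1_card (eq_bigl (fun s : U * {ffun 'I_k -> C} =>
  predT s.1 && [forall j, s.2 j \in F s.1])) => [|s].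
  rewrite -(pair_big_dep predT (fun u (g : {ffun 'I_k -> C}) => [forall j, g j \in F u])
    (fun _ _ => 1%N)) /=.
  apply: eq_bigr => u _; rewrite sum1_card -[X in (_ ^ X)%N]card_ord -card_ffun_on.
  apply: eq_card => g.
  by rewrite !inE; apply/forallP/ffun_onP => gF j; apply: gF.
by rewrite inE.
Qed.

Lemma sum_inv_sq_le K : \sum_(k < K.+1) ((k.+1 ^ 2)%:R : rat)^-1 <= 2 - (K.+1)%:R^-1.
Proof.
elim: K => [|K IH]; first by rewrite big_ord_recr big_ord0 /= add0r invr1; lra.
rewrite big_ord_recr /=; apply: le_trans (lerD IH (lexx _)) _.
set a : rat := (K.+1)%:R; have a_gt0 : 0 < a by rewrite ltr0n.
have Sa : (K.+2)%:R = a + 1 by rewrite -natr1.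
rewrite natrX Sa -subr_ge0.
have -> : 2 - (a + 1)^-1 - (2 - a^-1 + ((a + 1) ^+ 2)^-1) = (a * (a + 1) ^+ 2)^-1.
  by field; apply/andP; split; apply: lt0r_neq0; have := ler0n rat K; lra.
by rewrite invr_ge0 mulr_ge0 ?exprn_ge0 //; lra.
Qed.

Lemma sum_le_inv_sq K (h : 'I_K.+1 -> nat) (C : nat) :
  (forall k : 'I_K.+1, h k * k.+1 ^ 2 <= C)%N -> (\sum_k h k <= 2 * C)%N.
Proof.
move=> hC; rewrite -(ler_nat rat) natr_sum natrM.
have hk (k : 'I_K.+1) : (h k)%:R <= C%:R * ((k.+1 ^ 2)%:R : rat)^-1.
  by rewrite ler_pdivlMr ?ltr0n ?expn_gt0 // -natrM ler_nat.
apply: le_trans (ler_sum _ (fun k _ => hk k)) _.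
rewrite -mulr_sumr mulrC ler_wpM2r ?ler0n //; apply: le_trans (sum_inv_sq_le K) _.
by rewrite lerBlDr lerDl invr_ge0 ler0n.
Qed.

Section IntCodes.
Variable M : nat.

Definition zcode (c : 'I_(M.*2.+1)) : int := c%:Z - M%:Z.
Definition zencode (z : int) : 'I_(M.*2.+1) := inord (absz (z + M%:Z)).

Lemma zcode_le c : (absz (zcode c) <= M)%N.
Proof. by rewrite /zcode; have := ltn_ord c; lia. Qed.

Lemma zcode_inj : injective zcode.
Proof. by move=> c c' /addIr/eqP; rewrite eqz_nat => /eqP/val_inj. Qed.

Lemma zencodeK z : (absz z <= M)%N -> zcode (zencode z) = z.
Proof. by move=> zM; rewrite /zcode /zencode inordK; lia. Qed.

Definition sign_abs (z : int) : bool * 'I_M.+1 := (z < 0, inord (absz z)).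

Lemma sign_abs_inj z z' : (absz z <= M)%N -> (absz z' <= M)%N ->
  sign_abs z = sign_abs z' -> z = z'.
Proof.
move=> zM z'M [sgn /(congr1 val)]; rewrite /= !inordK ?ltnS // => abs_eq.
by rewrite (intEsign z) (intEsign z') sgn abs_eq.
Qed.

Definition mult_bounded (k : nat) := [set c | (absz (zcode c) * k <= M)%N].

Lemma card_mult_bounded k : (0 < M)%N -> (k <= M)%N ->
  (#|mult_bounded k| * k.+1 <= 6 * M)%N.
Proof.
move=> M0 kM; case: k kM => [|k] kM.
  by rewrite muln1; apply: leq_trans (max_card _) _; rewrite card_ord; lia.
set b := (M %/ k.+1)%N.
have cb c : c \in mult_bounded k.+1 -> (absz (zcode c) <= b)%N.
  by rewrite inE leq_divRL.
have inj : {in mult_bounded k.+1 &, injective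
                (fun c => inord (absz (zcode c + b%:Z)) : 'I_(b.*2.+1))}.
  move=> c c' /cb hc /cb hc' /(congr1 val) /=.
  rewrite !inordK; [by move=> e; apply: zcode_inj; lia | lia | lia].
have := leq_card_in _ _ inj; rewrite card_ord => card_le.
have [bk bM] : (b * k.+1 <= M)%N /\ (b <= M)%N by split; [apply: leq_divM | apply: leq_div].
by apply: leq_trans (leq_mul card_le (leqnn _)) _; nia.
Qed.

Lemma sum_card_mult_bounded : (0 < M)%N ->
  (\sum_(k < M.+1) #|mult_bounded k| ^ 4 <= 2 * (6 * M) ^ 4)%N.
Proof.
move=> M0; apply: sum_le_inv_sq => k.
have kM : (k <= M)%N by rewrite -ltnS.
apply: leq_trans (_ : #|mult_bounded k| ^ 4 * k.+1 ^ 4 <= _)%N.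
  by rewrite leq_mul2l leq_pexp2l ?orbT.
by rewrite -expnMn leq_exp2r // card_mult_bounded.
Qed.

(* Bounding the size of an intersection by the geometric mean of the sizes
   factorizes the double sum. *)
Lemma sum_card_mult_bounded2 : (0 < M)%N ->
  (\sum_(s : (bool * 'I_M.+1) * (bool * 'I_M.+1))
     #|mult_bounded s.1.2 :&: mult_bounded s.2.2| ^ 8 <= (4 * (6 * M) ^ 4) ^ 2)%N.
Proof.
move=> M0; apply: leq_trans (_ : \sum_(s : (bool * 'I_M.+1) * (bool * 'I_M.+1))
    #|mult_bounded s.1.2| ^ 4 * #|mult_bounded s.2.2| ^ 4 <= _)%N.
  apply: leq_sum => s _; rewrite (_ : 8 = 4 + 4)%N // expnD.
  by apply: leq_mul; rewrite leq_exp2r // subset_leq_card // ?subsetIl ?subsetIr.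
rewrite -(pair_big xpredT xpredT (fun a b : bool * 'I_M.+1 =>
  #|mult_bounded a.2| ^ 4 * #|mult_bounded b.2| ^ 4)%N).
rewrite /= -big_distrlr /= mulnn.
rewrite -(pair_big xpredT xpredT (fun (b : bool) (k : 'I_M.+1) => #|mult_bounded k| ^ 4)%N).
rewrite /= big_bool /= addnn -mul2n leq_exp2r // (_ : 4 = 2 * 2)%N // -mulnA.
by rewrite leq_mul2l /= sum_card_mult_bounded.
Qed.

End IntCodes.

Definition prim_dir (x : int * int) : int * int :=
  ((x.1 %/ gcdz x.1 x.2)%Z, (x.2 %/ gcdz x.1 x.2)%Z).

Definition line_coord (x y : int * int) : int :=
  (egcdz x.1 x.2).1 * y.1 + (egcdz x.1 x.2).2 * y.2.

(* With u * x.1 + v * x.2 = gcd, any y parallel to x is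
   (u * y.1 + v * y.2) times the primitive vector x / gcd. *)
Lemma line_coordP x y : x != 0 -> wedge y x = 0 ->
  y = (line_coord x y * (prim_dir x).1, line_coord x y * (prim_dir x).2).
Proof.
case: x y => [a b] [c d]; rewrite xpair_eqE negb_and /wedge /line_coord /prim_dir /=.
move=> nz_ab /eqP; rewrite subr_eq0 => /eqP cross.
have g0 : gcdz a b != 0 by rewrite gcdz_eq0 negb_and.
case: egcdzP => u v bezout _ /=.
have ha : (a %/ gcdz a b)%Z * gcdz a b = a by rewrite divzK // dvdz_gcdl.
have hb : (b %/ gcdz a b)%Z * gcdz a b = b by rewrite divzK // dvdz_gcdr.
congr pair; apply: (mulIf g0); rewrite -mulrA ?ha ?hb -bezout.
  have -> : c * (u * a + v * b) = u * a * c + v * (c * b) by ring.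
  by rewrite cross; ring.
have -> : d * (u * a + v * b) = v * b * d + u * (d * a) by ring.
by rewrite -cross; ring.
Qed.

Section Counting.
Variable N : nat.
Local Notation n := N.*2.+1.
Local Notation r := N.*2.
Local Notation T := ('M['I_n]_3 * 'M['I_n]_3)%type.
Implicit Types X Y : T.

Definition zmx (A : 'M['I_n]_3) : 'M[int]_3 := map_mx (@zcode N) A.
Local Notation p X := (sup_entry (zmx X.1) (zmx X.2)).
Local Notation q X := (sub_entry (zmx X.1) (zmx X.2)).
Local Notation d X := (diag_diff (zmx X.1) (zmx X.2)).

Definition sparse X := (\sum_i ((p X i != 0%R) + (q X i != 0%R)) <= 2)%N.
Definition line_list X := [:: p X 0; q X 0; p X 1; q X 1; p X 2; q X 2; d X 0; d X 1].
Definition aligned X := collinear (line_list X) && has (fun y => y != 0) (line_list X).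

Lemma decode_mxE (A : 'M['I_n]_3) : decode_mx A = map_mx intr (zmx A).
Proof. by apply/matrixP => i j; rewrite !mxE. Qed.

Lemma mem_line_list X i : (p X i \in line_list X) && (q X i \in line_list X).
Proof. by case: (I3_cases 0 i) => ->; rewrite ?add0r !inE !eqxx /= ?orbT. Qed.

Lemma S2_cover X : X \in S2 N -> sparse X || aligned X.
Proof.
rewrite inE !decode_mxE => /andP[/eqP AB /eqP rk].
have [le2 | [u nz_u line]] := commuting_rank2_dichotomy AB (eq_leq rk).
  apply/orP; left; move: le2; rewrite /sparse.
  by under eq_bigr do rewrite sup_entry_map sub_entry_map !(map_pair_eq0 intr_inj).
have [// | not_sparse] := boolP (sparse X); apply/orP; right; apply/andP; split.
  have on_u i : [/\ wedge (map_pair intr (p X i)) u = 0,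
      wedge (map_pair intr (q X i)) u = 0 & wedge (map_pair intr (d X i)) u = 0].
    by rewrite -sup_entry_map -sub_entry_map -diag_diff_map; case: (line i).
  have [? ? ?] := on_u 0; have [? ? ?] := on_u 1; have [? ? _] := on_u 2.
  rewrite -(collinear_map (@intr_inj rat)); apply: (collinear_line nz_u).
  by apply/allP => _ /mapP[y + ->]; rewrite !inE => /or4P[|||/or4P[|||/orP[]]] /eqP->; apply/eqP.
apply: contraR not_sparse => /hasPn zero; rewrite /sparse big1 // => i _.
by case/andP: (mem_line_list X i) => /zero/negPf-> /zero/negPf->.
Qed.

Definition code_at X (i j : 'I_3) : 'I_n * 'I_n := (X.1 i j, X.2 i j).
Definition diag_codes X : {ffun 'I_3 -> 'I_n * 'I_n} := [ffun i => code_at X i i].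
Definition offdiag_codes X : {ffun bool * 'I_3 -> 'I_n * 'I_n} :=
  [ffun bi => if bi.1 then code_at X bi.2 (bi.2 + 1) else code_at X (bi.2 + 1) bi.2].
Local Notation zero_code := (zencode N 0, zencode N 0).

Lemma entry_eq0 X i j : ((zmx X.1 i j, zmx X.2 i j) == 0) = (code_at X i j == zero_code).
Proof.
have zcode_eq0 (c : 'I_n) : (zcode c == 0) = (c == zencode N 0).
  by rewrite -(inj_eq (@zcode_inj N)) zencodeK.
by rewrite /zmx !mxE xpair_eqE !zcode_eq0.
Qed.

Lemma codes_inj : injective (fun X => (diag_codes X, offdiag_codes X)).
Proof.
case=> [A B] [A' B'] [/ffunP eq_d /ffunP eq_o].
have eq_u i := eq_o (true, i); have eq_l i := eq_o (false, i).
by congr pair; apply: mx3_eq => i;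
  [move: (eq_d i) | move: (eq_u i) | move: (eq_l i) | move: (eq_d i) | move: (eq_u i)
  | move: (eq_l i)]; rewrite !ffunE => -[? ?].
Qed.

Lemma card_offdiag_support X :
  #|[set bi | offdiag_codes X bi != zero_code]| =
  (\sum_i ((p X i != 0%R) + (q X i != 0%R)))%N.
Proof.
rewrite -sum1_card big_mkcond /=; under eq_bigr do rewrite inE ffunE.
rewrite -(pair_big xpredT xpredT (fun (b : bool) (i : 'I_3) =>
  if (if b then code_at X i (i + 1)%R else code_at X (i + 1)%R i) != zero_code then 1%N else 0%N)).
rewrite big_bool -big_split; apply: eq_bigr => i _.
by rewrite /sup_entry /sub_entry !entry_eq0 /=; do 2!case: (_ != _).
Qed.

Lemma card_sparse : (#|[set X | sparse X]| <= 64 * n ^ 10)%N.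
Proof.
set small := [set f : {ffun bool * 'I_3 -> 'I_n * 'I_n} | (#|[set bi | f bi != zero_code]| <= 2)%N].
have sub : [set (diag_codes X, offdiag_codes X) | X in [set X | sparse X]]
    \subset setX setT small.
  apply/subsetP => _ /imsetP[X + ->]; rewrite !inE => sparse_X.
  by rewrite card_offdiag_support.
rewrite -(card_imset _ codes_inj); apply: leq_trans (subset_leq_card sub) _.
rewrite cardsX cardsT card_ffun; apply: leq_trans (leq_mul (leqnn _) (card_small_support _ _ _)) _.
by rewrite !card_prod card_bool !card_ord; apply: eq_leq; ring.
Qed.

Lemma line_list_le X y : y \in line_list X -> (absz y.1 <= r)%N && (absz y.2 <= r)%N.
Proof.
have bN (A : 'M['I_n]_3) i j : (absz (zmx A i j) <= N)%N by rewrite mxE zcode_le.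
have be (A : 'M['I_n]_3) i j : (absz (zmx A i j) <= r)%N by have := bN A i j; lia.
have bd (A : 'M['I_n]_3) i j k l : (absz (zmx A i j - zmx A k l) <= r)%N.
  by have := bN A i j; have := bN A k l; lia.
by rewrite !inE => /or4P[|||/or4P[|||/orP[]]] /eqP-> /=; rewrite ?be ?bd.
Qed.

Definition first_nonzero X := nth 0 (line_list X) (find (fun y => y != 0) (line_list X)).
Definition dir X := prim_dir (first_nonzero X).
Definition coord X y := line_coord (first_nonzero X) y.

Lemma aligned_coord X y : aligned X -> y \in line_list X ->
  y = (coord X y * (dir X).1, coord X y * (dir X).2).
Proof.
case/andP=> /allrelP col has_nz y_in; apply: line_coordP; first exact: (nth_find 0 has_nz).
by apply/eqP/col => //; rewrite mem_nth // -has_find.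
Qed.

Lemma dir_bound X : aligned X ->
  [/\ (absz (dir X).1 <= r)%N, (absz (dir X).2 <= r)%N & dir X != 0].
Proof.
move=> al; have has_nz := proj2 (andP al).
have nz_x : first_nonzero X != 0 := nth_find 0 has_nz.
have x_in : first_nonzero X \in line_list X by rewrite mem_nth // -has_find.
have /andP[b1 b2] := line_list_le x_in.
have e := aligned_coord al x_in; rewrite e !abszM in b1 b2.
have c_pos : (0 < absz (coord X (first_nonzero X)))%N.
  by rewrite absz_gt0; apply: contraNneq nz_x => c0; rewrite e c0 !mul0r.
split; [exact: leq_trans (leq_pmull _ c_pos) b1 | exact: leq_trans (leq_pmull _ c_pos) b2 |].
by apply: contraNneq nz_x => u0; rewrite e u0 !mulr0.
Qed.

Lemma coord_bound X y : aligned X -> y \in line_list X ->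
  [/\ (absz (coord X y) <= r)%N, (absz (coord X y) * absz (dir X).1 <= r)%N
     & (absz (coord X y) * absz (dir X).2 <= r)%N].
Proof.
move=> al y_in; have /andP[b1 b2] := line_list_le y_in.
have e := aligned_coord al y_in; rewrite e !abszM in b1 b2; split=> //.
have [_ _] := dir_bound al; rewrite {1}[dir X]surjective_pairing xpair_eqE negb_and.
case/orP=> nz; [apply: leq_trans b1 | apply: leq_trans b2];
  by rewrite leq_pmulr // absz_gt0.
Qed.

Lemma zmx_inj : injective zmx.
Proof.
move=> A A' /matrixP eqA; apply/matrixP => i j; apply: zcode_inj.
by move: (eqA i j); rewrite !mxE.
Qed.

Lemma line_list_inj X Y :
  code_at X 0 0 = code_at Y 0 0 -> line_list X = line_list Y -> X = Y.
Proof.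
move=> [e0 e0'] eL; have e k := congr1 (nth 0 ^~ k) eL.
have eP i : p X i = p Y i.
  by case: (I3_cases 0 i) => ->; rewrite ?add0r; [apply: e 0 | apply: e 2 | apply: e 4].
have eQ i : q X i = q Y i.
  by case: (I3_cases 0 i) => ->; rewrite ?add0r; [apply: e 1 | apply: e 3 | apply: e 5].
have [||/zmx_inj eA /zmx_inj eB] := cyclic_entries_inj _ _ eP eQ (e 6%N) (e 7%N).
- by rewrite !mxE e0.
- by rewrite !mxE e0'.
by case: X Y eA eB {e0 e0' eL e eP eQ} => [A B] [A' B'] /= -> ->.
Qed.

Local Notation U := ((bool * 'I_r.+1) * (bool * 'I_r.+1))%type.

Definition line_code X : ('I_n * 'I_n) * (U * {ffun 'I_8 -> 'I_(r.*2.+1)}) :=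
  (code_at X 0 0, ((sign_abs r (dir X).1, sign_abs r (dir X).2),
    [ffun j : 'I_8 => zencode r (coord X (nth 0 (line_list X) j))])).

Definition line_codes := setX [set: 'I_n * 'I_n]
  [set s : U * {ffun 'I_8 -> 'I_(r.*2.+1)} |
     [forall j, s.2 j \in mult_bounded r s.1.1.2 :&: mult_bounded r s.1.2.2]].

Lemma line_code_in X : aligned X -> line_code X \in line_codes.
Proof.
move=> al; rewrite !inE /=; apply/forallP => j; rewrite ffunE !inE.
have y_in : nth 0 (line_list X) j \in line_list X by rewrite mem_nth.
have [c_le cu1 cu2] := coord_bound al y_in; have [u1 u2 _] := dir_bound al.
by rewrite zencodeK // !inordK ?ltnS // cu1 cu2.
Qed.

Lemma line_code_inj : {in [set X | aligned X] &, injective line_code}.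
Proof.
move=> X Y; rewrite !inE => alX alY eXY; apply: line_list_inj; first exact: (congr1 fst eXY).
have [u1X u2X _] := dir_bound alX; have [u1Y u2Y _] := dir_bound alY.
have edir : dir X = dir Y.
  have eu1 := congr1 (fun t => t.2.1.1) eXY; have eu2 := congr1 (fun t => t.2.1.2) eXY.
  by apply: injective_projections; apply: (sign_abs_inj (M := r)).
have /ffunP ecoef := congr1 (fun t => t.2.2) eXY.
apply: (@eq_from_nth _ 0) => // j j_lt.
have [yX yY] : (nth 0 (line_list X) j \in line_list X) /\ (nth 0 (line_list Y) j \in line_list Y).
  by rewrite !mem_nth.
have := ecoef (Ordinal j_lt); rewrite !ffunE => /(congr1 (@zcode r)).
have [[cX _ _] [cY _ _]] := (coord_bound alX yX, coord_bound alY yY).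
rewrite !zencodeK // => ec.
by rewrite (aligned_coord alX yX) (aligned_coord alY yY) ec edir.
Qed.

Lemma card_aligned : (0 < N)%N ->
  (#|[set X | aligned X]| <= n ^ 2 * (4 * (6 * r) ^ 4) ^ 2)%N.
Proof.
move=> N0; rewrite -(card_in_imset line_code_inj).
have sub : line_code @: [set X | aligned X] \subset line_codes.
  by apply/subsetP => _ /imsetP[X + ->]; rewrite inE; apply: line_code_in.
apply: leq_trans (subset_leq_card sub) _.
rewrite cardsX cardsT card_prod card_ord mulnn leq_mul2l; apply/orP; right.
rewrite (card_family (fun s : U => mult_bounded r s.1.2 :&: mult_bounded r s.2.2)).
by apply: sum_card_mult_bounded2; rewrite double_gt0.
Qed.

End Counting.

Theorem lemma4p3 :
  exists C : nat, (0 < C)%N /\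
    forall N : nat, (1 <= N)%N -> (#|S2 N| <= C * N ^ 10)%N.
Proof.
exists (64 * 3 ^ 10 + 9 * 16 * 12 ^ 8)%N; split=> // N N_gt0.
have cover : S2 N \subset [set X | sparse X] :|: [set X | aligned X].
  by apply/subsetP => X /S2_cover; rewrite !inE.
apply: leq_trans (subset_leq_card cover) _; rewrite cardsU.
have n3 : (N.*2.+1 <= 3 * N)%N by lia.
apply: leq_trans (leq_subr _ _) _; rewrite mulnDl; apply: leq_add.
  apply: leq_trans (card_sparse N) _.
  by rewrite -mulnA leq_mul2l -expnMn leq_exp2r // n3 orbT.
apply: leq_trans (card_aligned N_gt0) _.
rewrite (_ : 9 * 16 * 12 ^ 8 * N ^ 10 = (3 * N) ^ 2 * (4 * (6 * N.*2) ^ 4) ^ 2)%N.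
  by rewrite leq_mul2r leq_exp2r // n3 orbT.
by rewrite -mul2n; ring.
Qed.
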